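(* Let $q$ be a query program, $P$ a partial model, $\mathcal{T}$ a theory, and $P',\mathcal{T}'$ the partial model and theory produced by the witness-generation construction. If $M\in\mathit{solutions}(P',\mathcal{T}')$, then $\mathit{DS}_M(M)\ge g_{\mathrm{witness}}(M)$, where $\mathit{DS}_M(M)=\max_{k\vDash\mathcal{S}_{\mathrm{IPET}}\cup\mathcal{S}_{\mathrm{flow}}(M)}g_{\mathrm{IPET}}(k)$ and $g_{\mathrm{witness}}(M)=\max_{k\vDash\mathcal{S}_M}g_{\mathrm{IPET}}(k)$.
   Context: Linear systems. Fix a large finite reserve $\mathcal{X}$ of integer variables. A system of linear inequalities $\mathcal{S}$ is a finite set of inequalities $\sum_j a_{ij}x_j\le y_i$ (equations are written as pairs of inequalities). A valuation $k:\mathcal{X}\to\mathbb{Z}$ is a solution of $\mathcal{S}$ ($k\vDash\mathcal{S}$) if it satisfies all of them; $\mathcal{S}_1\vDash\mathcal{S}_2$ means every solution of $\mathcal{S}_1$ is a solution of $\mathcal{S}_2$. Models. A metamodel is a signature $\Sigma$ of unary class symbols, binary relation symbols, a unary existence symbol $\varepsilon$ and a binary equality symbol $\sim$. A (scoped) partial model $P=\langle O_P,I_P,\mathcal{S}_P\rangle$ consists of a finite object set $O_P$, a 3-valued interpretation $I_P(\sigma):O_P^{\mathrm{arity}(\sigma)}\to\{0,1,\tfrac12\}$ for each $\sigma\in\Sigma$ ($\tfrac12$ = unknown), and a scope $\mathcal{S}_P$ (a system of linear inequalities). $P$ is concrete if all values are $0$ or $1$, $I_P(\varepsilon)(o)=1$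 for all $o$, $I_P(\sim)(o_1,o_2)=1$ iff $o_1=o_2$, and $\mathcal{S}_P$ has a solution. Refinement: for $\mathit{abs}:O_Q\to O_P$, $P\succcurlyeq_{\mathit{abs}}Q$ holds if for all $\sigma$ and tuples $\bar q$, $I_P(\sigma)(\mathit{abs}(\bar q))$ is $\tfrac12$ or equals $I_Q(\sigma)(\bar q)$; every $p$ with $I_P(\varepsilon)(p)=1$ has a preimage under $\mathit{abs}$; and $\mathcal{S}_Q\vDash\mathcal{S}_P$. $P\succcurlyeq Q$ if $P\succcurlyeq_{\mathit{abs}}Q$ for some $\mathit{abs}$. For a first-order predicate $\varphi$ over $\Sigma$ with free variables $v_1,\dots,v_n$ and a concrete model $M$, $M\#\varphi$ is the number of maps $Z:\{v_1,\dots,v_n\}\to O_M$ under which $\varphi$ is true in $M$. A theory $\mathcal{T}=\langle\Phi,r\rangle$ is a finite set $\Phi$ of predicates with a map $r:\Phi\to\mathcal{X}$; a concrete $M$ is compatible with it ($M\vDash\mathcal{T}$) if $\mathcal{S}_M\vDash r(\varphi)=M\#\varphi$ for all $\varphi\in\Phi$. $\mathit{solutions}(P,\mathcal{T})$ is the set of concrete models $M$ with $P\succcurlyeq M$ and $M\vDash\mathcal{T}$. Program and IPET. $q$ is a query program generated from a graph-query search plan (nested for-loops implementing extend constraints and if-statements implementing check constraints). $\mathit{BB}$ is its set of basic blocks; its weighted CFG is $\langle V,E,s,t,w,\mathit{tr}\rangle$ with edges $E\subseteq V\times V$, start/end $s,t$, weights $w:E\to\mathbb{N}$, traceability $\mathit{tr}:V\to\mathit{BB}$.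 $f:E\to\mathcal{X}$ assigns distinct variables to edges. $\mathcal{S}_{\mathrm{IPET}}$ contains $\sum_{e=\langle s,n\rangle}f(e)=1$, $\sum_{e=\langle n,t\rangle}f(e)=1$, flow conservation at every $n\ne s,t$, $-f(e)\le0$, and possibly further low-level flow facts. $g_{\mathrm{IPET}}(k)=\sum_{e\in E}w(e)k(f(e))$. Basic block predicates. For $bb\in\mathit{BB}$, $\psi_{bb}$ is the conjunction of the atomic predicates of all for/if statements enclosing $bb$ (extend atoms without their existential quantifier; check literals as-is); $\psi_{bb}=\mathrm{true}$ if none. If $bb$ is the header of loop $\ell$, also $\psi'_{bb}=\psi_{bb}\wedge(\text{atom of }\ell)$. $\Psi$ is the set of all these predicates. For concrete $M$, $\mathcal{S}_{\mathrm{flow}}(M)$ contains for each $bb$: $\sum_{e=\langle n_1,n_2\rangle\in E,\mathit{tr}(n_1)=bb}f(e)=M\#\psi_{bb}+M\#\psi'_{bb}$ (loop header) or $=M\#\psi_{bb}$ (otherwise). Witness generation. Given $P=\langle O_P,I_P,\mathcal{S}_P\rangle$ and $\mathcal{T}=\langle\Phi,r\rangle$ (with the range of $f$ disjoint from the range of $r$ and from the variables of $\mathcal{S}_P$), extend $r$ to $r'$ on $\Phi\cup\Psi$ by assigning to each $\psi\in\Psi$ a fresh distinct variable (not in the range of $f$, of $r$, or in $\mathcal{S}_P$). $\mathcal{S}_{\mathrm{merge}}$ contains for each $bb$: $r'(\psi_{bb})+r'(\psi'_{bb})-\sum_{e=\langle n_1,n_2\rangle\in E,\mathit{tr}(n_1)=bb}f(e)=0$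 if $bb$ is a loop header, else $r'(\psi_{bb})-\sum_{e=\langle n_1,n_2\rangle\in E,\mathit{tr}(n_1)=bb}f(e)=0$. Set $P'=\langle O_P,I_P,\mathcal{S}_P\cup\mathcal{S}_{\mathrm{IPET}}\cup\mathcal{S}_{\mathrm{merge}}\rangle$ and $\mathcal{T}'=\langle\Phi\cup\Psi,r'\rangle$. *)

From mathcomp Require Import all_boot all_algebra.
From Stdlib Require List.
Set Implicit Arguments. Unset Strict Implicit. Unset Printing Implicit Defensive.
Import GRing.Theory Num.Theory.
Local Open Scope ring_scope.

(* An inequality  sum_j a_j x_j <= y  is a list of (a_j, x_j) and y.   *)
Record ineq (X : Type) := Ineq { ilhs : seq (int * X); irhs : int }.

Definition lexpr_val (X : Type) (k : X -> int) (l : seq (int * X)) : int :=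
  \sum_(p <- l) p.1 * k p.2.

Definition sat_ineq (X : Type) (k : X -> int) (i : ineq X) : bool :=
  lexpr_val k (ilhs i) <= irhs i.

Definition sat (X : Type) (k : X -> int) (S : seq (ineq X)) : bool :=
  all (sat_ineq k) S.

Definition entails (X : Type) (S1 S2 : seq (ineq X)) : Prop :=
  forall k, sat k S1 -> sat k S2.

Definition eqn (X : Type) (l : seq (int * X)) (c : int) : seq (ineq X) :=
  [:: Ineq l c; Ineq [seq (- p.1, p.2) | p <- l] (- c)].

Definition vars (X : eqType) (S : seq (ineq X)) : seq X :=
  flatten [seq [seq p.2 | p <- ilhs i] | i <- S].

(* Three-valued logic and (scoped) partial models over a signature     *)
(* with class symbols C, relation symbols Rl, existence and equality.  *)
Inductive tv := tv0 | tv1 | tvh.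

Definition tv_ref (a b : tv) : Prop :=
  match a, b with
  | tvh, _ => True | tv0, tv0 => True | tv1, tv1 => True | _, _ => False
  end.

Definition is1 (a : tv) : bool := if a is tv1 then true else false.

Record pmodel (C Rl : Type) (X : Type) := PModel {
  obj : finType;
  icls : C -> obj -> tv;
  irel : Rl -> obj -> obj -> tv;
  ieps : obj -> tv;
  ieq : obj -> obj -> tv;
  scope : seq (ineq X) }.
Arguments obj {C Rl X} p.
Arguments icls {C Rl X} p _ _.
Arguments irel {C Rl X} p _ _ _.
Arguments ieps {C Rl X} p _.
Arguments ieq {C Rl X} p _ _.
Arguments scope {C Rl X} p.

Definition with_scope (C Rl X : Type) (P : pmodel C Rl X) (S : seq (ineq X))
  : pmodel C Rl X :=
  @PModel C Rl X (obj P) (icls P) (irel P) (ieps P)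
    (ieq P) S.

Definition concrete (C Rl X : Type) (P : pmodel C Rl X) : Prop :=
  [/\ forall c o, icls P c o <> tvh,
      forall r o1 o2, irel P r o1 o2 <> tvh,
      forall o, ieps P o = tv1,
      forall o1 o2, ieq P o1 o2 = (if o1 == o2 then tv1 else tv0)
    & exists k, sat k (scope P)].

Definition refines_by (C Rl X : Type) (P Q : pmodel C Rl X)
  (abs : obj Q -> obj P) : Prop :=
  [/\ forall c q, tv_ref (icls P c (abs q)) (icls Q c q),
      forall r q1 q2, tv_ref (irel P r (abs q1) (abs q2)) (irel Q r q1 q2),
      forall q, tv_ref (ieps P (abs q)) (ieps Q q),
      forall q1 q2, tv_ref (ieq P (abs q1) (abs q2)) (ieq Q q1 q2)
    & (forall p, ieps P p = tv1 -> exists q, abs q = p)] /\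
    entails (scope Q) (scope P).

Definition refines (C Rl X : Type) (P Q : pmodel C Rl X) : Prop :=
  exists abs : obj Q -> obj P, refines_by abs.

Inductive fo (C Rl : Type) :=
| FTrue
| FCls of C & nat
| FRel of Rl & nat & nat
| FEps of nat
| FEq of nat & nat
| FNot of fo C Rl
| FAnd of fo C Rl & fo C Rl
| FOr of fo C Rl & fo C Rl
| FEx of nat & fo C Rl
| FAll of nat & fo C Rl.

Fixpoint fv (C Rl : Type) (phi : fo C Rl) : seq nat :=
  match phi with
  | FTrue => [::]
  | FCls _ v => [:: v]
  | FRel _ v1 v2 => [:: v1; v2]
  | FEps v => [:: v]
  | FEq v1 v2 => [:: v1; v2]
  | FNot a => fv a
  | FAnd a b => fv a ++ fv b
  | FOr a b => fv a ++ fv b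
  | FEx v a => filter (predC1 v) (fv a)
  | FAll v a => filter (predC1 v) (fv a)
  end.

Definition upd (O : Type) (rho : nat -> option O) (v : nat) (o : O) :=
  fun x => if x == v then Some o else rho x.

Fixpoint holds (C Rl X : Type) (M : pmodel C Rl X)
  (rho : nat -> option (obj M)) (phi : fo C Rl) : bool :=
  match phi with
  | FTrue => true
  | FCls c v => if rho v is Some o then is1 (icls M c o) else false
  | FRel r v1 v2 =>
      match rho v1, rho v2 with
      | Some o1, Some o2 => is1 (irel M r o1 o2) | _, _ => false end
  | FEps v => if rho v is Some o then is1 (ieps M o) else false
  | FEq v1 v2 =>
      match rho v1, rho v2 with
      | Some o1, Some o2 => is1 (ieq M o1 o2) | _, _ => false end
  | FNot a => ~~ holds rho a
  | FAnd a b => holds rho a && holds rho b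
  | FOr a b => holds rho a || holds rho b
  | FEx v a => [exists o, holds (upd rho v o) a]
  | FAll v a => [forall o, holds (upd rho v o) a]
  end.

Definition env_of (O : Type) (s : seq nat) (Z : seq_sub s -> O)
  : nat -> option O :=
  fun x => match insub x : option (seq_sub s) with
           | Some y => Some (Z y) | None => None end.

Definition mcount (C Rl X : Type) (M : pmodel C Rl X) (phi : fo C Rl) : nat :=
  #|[pred Z : {ffun seq_sub (fv phi) -> obj M} | holds (env_of Z) phi]|.

(* A theory <Phi, r> is represented by its graph: the list of pairs    *)
(* (phi, r phi) for phi in Phi.                                         *)
Definition theory (C Rl X : Type) := seq (fo C Rl * X).

Definition mk_theory (C Rl X : Type) (Phi : seq (fo C Rl)) (r : fo C Rl -> X)
  : theory C Rl X := [seq (phi, r phi) | phi <- Phi].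

Definition compatible (C Rl X : Type) (M : pmodel C Rl X) (T : theory C Rl X)
  : Prop :=
  forall p, List.In p T ->
    forall k, sat k (scope M) -> k p.2 = (mcount M p.1)%:Z.

Definition solution (C Rl X : Type) (P : pmodel C Rl X) (T : theory C Rl X)
  (M : pmodel C Rl X) : Prop :=
  [/\ concrete M, refines P M & compatible M T].

(* Query programs, abstracted to their basic blocks: for each basic    *)
(* block, the list of atoms of the for/if statements enclosing it      *)
(* (extend atoms without quantifier, check literals as-is), and, if    *)
(* the block is the header of a loop l, the atom of l.                 *)
Record qprog (C Rl : Type) := QProg {
  BB : finType;
  encl : BB -> seq (fo C Rl);
  header : BB -> option (fo C Rl) }.
Arguments BB {C Rl} q.
Arguments encl {C Rl q} _.
Arguments header {C Rl q} _.

Definition psi (C Rl : Type) (q : qprog C Rl) (bb : BB q) : fo C Rl :=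
  foldr (@FAnd C Rl) (@FTrue C Rl) (encl bb).

Definition psi' (C Rl : Type) (q : qprog C Rl) (bb : BB q) (a : fo C Rl)
  : fo C Rl := FAnd (psi bb) a.

Record wcfg (B : finType) := WCfg {
  V : finType;
  E : {set V * V};
  src : V;
  tgt : V;
  w : V * V -> nat;
  tr : V -> B }.
Arguments V {B} w.
Arguments E {B} w.
Arguments src {B} w.
Arguments tgt {B} w.
Arguments w {B} w _.
Arguments tr {B} w _.

Section IPET.
Variables (C Rl : Type) (X : eqType) (q : qprog C Rl) (G : wcfg (BB q))
  (f : V G * V G -> X).

Definition ones (l : seq (V G * V G)) : seq (int * X) :=
  [seq ((1 : int), f e) | e <- l].
Definition mones (l : seq (V G * V G)) : seq (int * X) :=
  [seq ((-1 : int), f e) | e <- l].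

Definition edges := enum (E G).

(* S_IPET, with additional low-level flow facts [extra] *)
Definition S_IPET (extra : seq (ineq X)) : seq (ineq X) :=
  eqn (ones [seq e <- edges | e.1 == src G]) 1
  ++ eqn (ones [seq e <- edges | e.2 == tgt G]) 1
  ++ flatten [seq eqn (ones [seq e <- edges | e.2 == n]
                       ++ mones [seq e <- edges | e.1 == n]) 0
             | n <- enum (V G) & (n != src G) && (n != tgt G)]
  ++ [seq Ineq (mones [:: e]) 0 | e <- edges]
  ++ extra.

Definition g_IPET (k : X -> int) : int :=
  \sum_(e in E G) (w G e)%:Z * k (f e).

Definition out_of (bb : BB q) := [seq e <- edges | tr G e.1 == bb].

Definition S_flow (M : pmodel C Rl X) : seq (ineq X) :=
  flatten [seq eqn (ones (out_of bb))
                 ((mcount M (psi bb))%:Z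
                  + (if header bb is Some a then (mcount M (psi' bb a))%:Z
                     else 0))
          | bb <- enum (BB q)].

Definition S_merge (rpsi rpsi' : BB q -> X) : seq (ineq X) :=
  flatten [seq eqn (((1 : int), rpsi bb)
                    :: (if header bb is Some _ then [:: ((1 : int), rpsi' bb)]
                        else [::])
                    ++ mones (out_of bb)) 0
          | bb <- enum (BB q)].

Definition Psi_theory (rpsi rpsi' : BB q -> X) : theory C Rl X :=
  [seq (psi bb, rpsi bb) | bb <- enum (BB q)]
  ++ flatten [seq (if header bb is Some a then [:: (psi' bb a, rpsi' bb)]
                   else [::]) | bb <- enum (BB q)].

(* sets of values whose suprema are DS_M(M) and g_witness(M) *)
Definition DS_set (extra : seq (ineq X)) (M : pmodel C Rl X) : int -> Prop :=
  fun x => exists k, sat k (S_IPET extra ++ S_flow M) /\ x = g_IPET k.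

Definition gw_set (M : pmodel C Rl X) : int -> Prop :=
  fun x => exists k, sat k (scope M) /\ x = g_IPET k.

End IPET.

(* sup A <= sup B in the extended integers: every upper bound of B is  *)
(* an upper bound of A (this is max A <= max B whenever both exist).   *)
Definition sup_le (A B : int -> Prop) : Prop :=
  forall u : int, (forall x, B x -> x <= u) -> (forall x, A x -> x <= u).

(** Every valuation [k] of the witness scope [S_M] is itself a valid IPET
    flow of [M]: [S_M] entails the scope of [P'], hence [S_IPET] and
    [S_merge], and compatibility with [T'] forces the fresh variables
    [r'(psi_bb)], [r'(psi'_bb)] to take the values [M # psi_bb],
    [M # psi'_bb] under [k], which turns each merge equation into the
    corresponding flow equation of [S_flow(M)].  So the set maximised by
    [g_witness(M)] is contained in the one maximised by [DS_M(M)]. *)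

From Pilot Require Import Defs.
From mathcomp Require Import all_boot all_order all_algebra.
Set Implicit Arguments. Unset Strict Implicit. Unset Printing Implicit Defensive.
Import Order.TTheory GRing.Theory Num.Theory.
Local Open Scope ring_scope.

Lemma In_of_mem (T : eqType) (x : T) (s : seq T) : x \in s -> List.In x s.
Proof.
elim: s => //= y s IHs; rewrite in_cons => /orP[/eqP ->|/IHs]; by [left|right].
Qed.

Lemma In_flatten (A : Type) (ss : seq (seq A)) (s : seq A) (x : A) :
  List.In s ss -> List.In x s -> List.In x (flatten ss).
Proof.
elim: ss => //= t ss IHss [-> | /IHss Hs] Hx; apply: List.in_or_app.
  by left.
by right; apply: Hs.
Qed.

Arguments sat : simpl never.

Section LinearExpressions.
Variables (X : Type) (k : X -> int).

Lemma lexpr_val_nil : lexpr_val k [::] = 0.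
Proof. exact: big_nil. Qed.

Lemma lexpr_val_cat (l1 l2 : seq (int * X)) :
  lexpr_val k (l1 ++ l2) = lexpr_val k l1 + lexpr_val k l2.
Proof. by rewrite /lexpr_val big_cat. Qed.

Lemma lexpr_val_cons (p : int * X) (l : seq (int * X)) :
  lexpr_val k (p :: l) = p.1 * k p.2 + lexpr_val k l.
Proof. by rewrite /lexpr_val big_cons. Qed.

Lemma lexpr_val_opp (l : seq (int * X)) :
  lexpr_val k [seq (- p.1, p.2) | p <- l] = - lexpr_val k l.
Proof. by rewrite /lexpr_val big_map -sumrN; apply: eq_bigr => p _; rewrite mulNr. Qed.

Lemma sat_eqn (l : seq (int * X)) (c : int) :
  sat k (Defs.eqn l c) = (lexpr_val k l == c).
Proof. by rewrite /sat /= /sat_ineq /= lexpr_val_opp lerN2 andbT eq_le. Qed.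

Lemma sat_cat (S1 S2 : seq (ineq X)) : sat k (S1 ++ S2) = sat k S1 && sat k S2.
Proof. exact: all_cat. Qed.

Lemma sat_flatten (Ss : seq (seq (ineq X))) :
  sat k (flatten Ss) = all (sat k) Ss.
Proof. by elim: Ss => //= S Ss IHSs; rewrite sat_cat IHSs. Qed.

End LinearExpressions.

Lemma compatible_catr (C Rl X : Type) (M : pmodel C Rl X) (T1 T2 : theory C Rl X) :
  compatible M (T1 ++ T2) -> compatible M T2.
Proof. by move=> HM p Hp; apply: HM; apply: List.in_or_app; right. Qed.

Lemma sup_le_subset (A B : int -> Prop) : (forall x, A x -> B x) -> sup_le A B.
Proof. by move=> subAB u ubB x /subAB /ubB. Qed.

Section WitnessFlow.
Variables (C Rl : Type) (X : eqType) (q : qprog C Rl) (G : wcfg (BB q)).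
Variables (f : V G * V G -> X) (rpsi rpsi' : BB q -> X) (M : pmodel C Rl X).
Variable k : X -> int.

Lemma lexpr_val_mones (l : seq (V G * V G)) :
  lexpr_val k (mones f l) = - lexpr_val k (ones f l).
Proof.
rewrite /lexpr_val !big_map -sumrN; apply: eq_bigr => e _ /=.
by rewrite mulN1r mul1r.
Qed.

Hypothesis compat_Psi : compatible M (Psi_theory rpsi rpsi').
Hypothesis sat_scope : sat k (scope M).

Lemma compatible_psi (bb : BB q) : k (rpsi bb) = (mcount M (psi bb))%:Z.
Proof.
apply: (@compat_Psi (psi bb, rpsi bb) _ k sat_scope); apply: List.in_or_app; left.
exact: (List.in_map (fun b => (psi b, rpsi b)) _ _ (In_of_mem (mem_enum _ bb))).
Qed.

Lemma compatible_psi' (bb : BB q) (a : fo C Rl) :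
  header bb = Some a -> k (rpsi' bb) = (mcount M (psi' bb a))%:Z.
Proof.
move=> Ha; apply: (@compat_Psi (psi' bb a, rpsi' bb) _ k sat_scope).
apply: List.in_or_app; right.
apply: (@In_flatten _ _ [:: (psi' bb a, rpsi' bb)]); last by left.
have := List.in_map
  (fun b => if header b is Some a0 then [:: (psi' b a0, rpsi' b)] else [::])
  _ _ (In_of_mem (mem_enum _ bb)).
by rewrite /= Ha.
Qed.

Lemma sat_flow_of_merge : sat k (S_merge f rpsi rpsi') -> sat k (S_flow f M).
Proof.
rewrite /S_merge /S_flow !sat_flatten !all_map => /allP merge_eqs.
apply/allP => bb /merge_eqs /=.
rewrite !sat_eqn lexpr_val_cons lexpr_val_cat lexpr_val_mones mul1r compatible_psi.
case Ha: (header bb) => [a|] /=.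
- rewrite lexpr_val_cons lexpr_val_nil mul1r addr0 (compatible_psi' Ha).
  by rewrite addrA subr_eq0 eq_sym.
- by rewrite lexpr_val_nil add0r subr_eq0 eq_sym addr0.
Qed.

End WitnessFlow.

Theorem lemmaA3
  (C Rl : Type) (X : eqType)
  (q : qprog C Rl) (G : wcfg (BB q)) (f : V G * V G -> X)
  (extra : seq (ineq X))
  (P : pmodel C Rl X) (Phi : seq (fo C Rl)) (r : fo C Rl -> X)
  (rpsi rpsi' : BB q -> X)
  (* f assigns distinct variables to edges *)
  (Hf_inj : {in E G &, injective f})
  (* further low-level flow facts only mention edge variables *)
  (Hextra : forall x, x \in vars extra -> exists2 e, e \in E G & x = f e)
  (* range of f disjoint from range of r and from the variables of S_P *)
  (Hf_r : forall e phi, e \in E G -> List.In phi Phi -> f e <> r phi)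
  (Hf_P : forall e, e \in E G -> f e \notin vars (scope P))
  (* r' assigns fresh distinct variables to the predicates of Psi *)
  (Hpsi_inj : injective rpsi)
  (Hpsi'_inj : forall bb bb' a a', header bb = Some a -> header bb' = Some a' ->
                 rpsi' bb = rpsi' bb' -> bb = bb')
  (Hpsi_psi' : forall bb bb' a, header bb' = Some a -> rpsi bb <> rpsi' bb')
  (Hpsi_f : forall bb e, e \in E G -> rpsi bb <> f e)
  (Hpsi_r : forall bb phi, List.In phi Phi -> rpsi bb <> r phi)
  (Hpsi_P : forall bb, rpsi bb \notin vars (scope P))
  (Hpsi'_f : forall bb a e, header bb = Some a -> e \in E G -> rpsi' bb <> f e)
  (Hpsi'_r : forall bb a phi, header bb = Some a -> List.In phi Phi ->
               rpsi' bb <> r phi)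
  (Hpsi'_P : forall bb a, header bb = Some a -> rpsi' bb \notin vars (scope P))
  (M : pmodel C Rl X)
  (HM : solution
          (with_scope P (scope P ++ S_IPET f extra ++ S_merge f rpsi rpsi'))
          (mk_theory Phi r ++ Psi_theory rpsi rpsi')
          M) :
  sup_le (gw_set f M) (DS_set f extra M).
Proof.
have [_ [_ [_ entails_P']] compat_T'] := HM.
apply: sup_le_subset => _ [k [sat_M ->]]; exists k; split=> //.
have : sat k (scope P ++ S_IPET f extra ++ S_merge f rpsi rpsi') := entails_P' k sat_M.
rewrite sat_cat => /andP[_]; rewrite sat_cat => /andP[sat_IPET sat_merge].
rewrite sat_cat sat_IPET.
exact: sat_flow_of_merge (compatible_catr compat_T') sat_M sat_merge.
Qed.
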